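(* Let $p,q\ge2$ and $n\ge1$. If $A\in\Omega_1(p,n)$ and $B\in\Omega_1(q,n)$, then $A\times B\in\Omega_1(p+q-2,n)$.
   Context: Let $I_n=\{1,\dots,n\}$. A $d$-dimensional matrix of order $n$ is a function $I_n^d\to\mathbb R$; write $a_{i_1\cdots i_d}=A(i_1,\dots,i_d)$. A line is the set of positions obtained by varying one coordinate and fixing the others. $\Omega_1(d,n)$ is the set of non-negative $d$-dimensional matrices of order $n$ whose entries in every line sum to $1$. For a $p$-dimensional $A$ and a $q$-dimensional $B$ of order $n$, the product $A\times B$ is the $(p+q-2)$-dimensional matrix of order $n$ with $(A\times B)_{i_1\cdots i_{p+q-2}}=\sum_{j=1}^n a_{i_1\cdots i_{p-1}j}\,b_{j i_p\cdots i_{p+q-2}}$. *)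

From mathcomp Require Import all_boot all_order all_algebra.
Set Implicit Arguments. Unset Strict Implicit. Unset Printing Implicit Defensive.
Import Order.TTheory GRing.Theory Num.Theory.
Local Open Scope ring_scope.

(* A d-dimensional matrix of order n over R: a function I_n^d -> R.
   Positions are functions 'I_d -> 'I_n (coordinate k gives i_{k+1}). *)
Definition mxd (R : Type) (d n : nat) := ({ffun 'I_d -> 'I_n} -> R).

Definition setpos d n (i : {ffun 'I_d -> 'I_n}) (k : 'I_d) (j : 'I_n)
  : {ffun 'I_d -> 'I_n} := [ffun l => if l == k then j else i l].

(* Omega_1(d,n): nonnegative, every line sums to 1.  A line is determined by
   a direction k and a position i (whose k-th coordinate is varied). *)
Definition Omega1 (R : numDomainType) d n (A : mxd R d n) : Prop :=
  (forall i, 0 <= A i) /\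
  (forall (k : 'I_d) (i : {ffun 'I_d -> 'I_n}),
      \sum_(j < n) A (setpos i k j) = 1).

(* read coordinate m (0-based, as a nat) of a position, default x0 if out of range *)
Definition coord d n (i : {ffun 'I_d -> 'I_n}) (m : nat) (x0 : 'I_n) : 'I_n :=
  odflt x0 (omap i (insub m)).

(* Product A x B of a p-dim A and q-dim B: (p+q-2)-dimensional,
   (A x B)_{i_1..i_{p+q-2}} = sum_j a_{i_1..i_{p-1} j} b_{j i_p .. i_{p+q-2}}.
   With 0-based coordinates: A-index has coordinates i_0..i_{p-2}, j;
   B-index has j, i_{p-1}, .., i_{p+q-3}. *)
Definition mxd_mul (R : pzSemiRingType) (p q n : nat) (A : mxd R p n) (B : mxd R q n)
  : mxd R (p + q - 2) n :=
  fun i => \sum_(j < n)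
    (A [ffun k : 'I_p => if (k < p - 1)%N then coord i k j else j] *
     B [ffun k : 'I_q => if k == 0%N :> nat then j else coord i (p - 1 + (k - 1)) j]).

From Pilot Require Import Defs.
From mathcomp Require Import all_boot all_order all_algebra.
From mathcomp Require Import zify.
Set Implicit Arguments. Unset Strict Implicit. Unset Printing Implicit Defensive.
Import Order.TTheory GRing.Theory Num.Theory.
Local Open Scope ring_scope.

(* If k is one of the first p - 1
   coordinates, the sum over k is, for each contracted index j, a line of A,
   hence 1; what remains is the sum of B along its first coordinate, again 1.
   Otherwise k is a coordinate of B and the roles of A and B are swapped. *)

Section Coord.

Variables d n : nat.
Implicit Types (i : {ffun 'I_d -> 'I_n}) (x y t : 'I_n).

Lemma coordE i m x (hm : (m < d)%N) : Defs.coord i m x = i (Ordinal hm).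
Proof. by rewrite /Defs.coord insubT. Qed.

Lemma coord_dflt i m x y : (m < d)%N -> Defs.coord i m x = Defs.coord i m y.
Proof. by move=> hm; rewrite !(coordE _ _ hm). Qed.

Lemma coord_setpos i k t m x :
  Defs.coord (setpos i k t) m x = if m == k then t else Defs.coord i m x.
Proof.
rewrite /Defs.coord; case: insubP => [u _ <- /=|/negP out_m]; first by rewrite ffunE.
by case: eqP => // mk; case: out_m; rewrite mk ltn_ord.
Qed.

End Coord.

Section MulPositions.

Variables n p q : nat.
Implicit Types (i : {ffun 'I_(p + q - 2) -> 'I_n}) (k : 'I_(p + q - 2)) (j t : 'I_n).

Definition mul_posl i j : {ffun 'I_p -> 'I_n} :=
  [ffun l : 'I_p => if (l < p - 1)%N then Defs.coord i l j else j].

Definition mul_posr i j : {ffun 'I_q -> 'I_n} :=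
  [ffun l : 'I_q => if l == 0%N :> nat then j else Defs.coord i (p - 1 + (l - 1)) j].

Lemma mxd_mulE (R : pzSemiRingType) (A : mxd R p n) (B : mxd R q n) i :
  mxd_mul A B i = \sum_(j < n) A (mul_posl i j) * B (mul_posr i j).
Proof. by []. Qed.

Lemma mul_posl_setpos_low i k t j (kA : 'I_p) :
  kA = k :> nat -> (k < p - 1)%N ->
  mul_posl (setpos i k t) j = setpos (mul_posl i j) kA t.
Proof.
move=> kAk k_low; apply/ffunP => l; rewrite !ffunE coord_setpos -val_eqE /= kAk.
by case: ltnP => l_low; case: eqP => //; lia.
Qed.

Lemma mul_posr_setpos_low i k t j :
  (k < p - 1)%N -> mul_posr (setpos i k t) j = mul_posr i j.
Proof.
move=> k_low; apply/ffunP => l; rewrite !ffunE coord_setpos.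
by case: eqP => // lk; rewrite ifF //; apply/eqP; lia.
Qed.

Lemma mul_posl_setpos_high i k t j :
  (p - 1 <= k)%N -> mul_posl (setpos i k t) j = mul_posl i j.
Proof.
move=> k_high; apply/ffunP => l; rewrite !ffunE coord_setpos.
by case: ltnP => // l_low; rewrite ifF //; apply/eqP; lia.
Qed.

Lemma mul_posr_setpos_high i k t j (kB : 'I_q) :
  kB = (k - (p - 1)).+1%N :> nat -> (p - 1 <= k)%N ->
  mul_posr (setpos i k t) j = setpos (mul_posr i j) kB t.
Proof.
move=> kBk k_high; apply/ffunP => l; rewrite !ffunE coord_setpos -val_eqE /= kBk.
case: eqP => [l0 | l_gt0]; first by rewrite ifF //; apply/eqP; lia.
by congr (if _ then _ else _); apply/eqP/eqP; lia.
Qed.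

Lemma setpos_mul_posl_last i j (j' : 'I_n) (pA : 'I_p) :
  (0 < q)%N -> pA = (p - 1)%N :> nat -> setpos (mul_posl i j') pA j = mul_posl i j.
Proof.
move=> q_gt0 pAp; apply/ffunP => l; rewrite !ffunE -val_eqE /= pAp.
case: eqP => [-> | /eqP l_ne]; first by rewrite ltnn.
have l_low : (l < p - 1)%N by have := ltn_ord l; lia.
by rewrite l_low; apply: coord_dflt; lia.
Qed.

Lemma setpos_mul_posr_first i j (j' : 'I_n) (oB : 'I_q) :
  (0 < p)%N -> oB = 0%N :> nat -> setpos (mul_posr i j') oB j = mul_posr i j.
Proof.
move=> p_gt0 oB0; apply/ffunP => l; rewrite !ffunE -val_eqE /= oB0.
case: eqP => // /eqP l_gt0; apply: coord_dflt; have := ltn_ord l; lia.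
Qed.

End MulPositions.

Definition line_stochastic (R : pzSemiRingType) d n (A : mxd R d n) : Prop :=
  forall (k : 'I_d) (i : {ffun 'I_d -> 'I_n}), \sum_(j < n) A (setpos i k j) = 1.

Section LineStochasticMul.

Variables (R : pzSemiRingType) (n p q : nat) (A : mxd R p n) (B : mxd R q n).
Hypotheses (p_gt0 : (0 < p)%N) (q_gt0 : (0 < q)%N).
Hypotheses (A1 : line_stochastic A) (B1 : line_stochastic B).

Lemma mxd_mul_line_low i (k : 'I_(p + q - 2)) :
  (k < p - 1)%N -> \sum_(t < n) mxd_mul A B (setpos i k t) = 1.
Proof.
move=> k_low; have kA_lt : (k < p)%N by lia.
under eq_bigr do rewrite mxd_mulE.
rewrite exchange_big.
under eq_bigr => j _.
  under eq_bigr do rewrite (mul_posl_setpos_low _ _ _ (kA := Ordinal kA_lt)) //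
                           mul_posr_setpos_low //.
  rewrite -mulr_suml A1 mul1r.
  (* [i k] merely supplies some element of ['I_n]; which one is irrelevant. *)
  rewrite -(setpos_mul_posr_first _ _ (i k) (oB := Ordinal q_gt0)) //.
over.
exact: B1.
Qed.

Lemma mxd_mul_line_high i (k : 'I_(p + q - 2)) :
  (p - 1 <= k)%N -> \sum_(t < n) mxd_mul A B (setpos i k t) = 1.
Proof.
move=> k_high; have kB_lt : ((k - (p - 1)).+1 < q)%N by have := ltn_ord k; lia.
have pA_lt : (p - 1 < p)%N by lia.
under eq_bigr do rewrite mxd_mulE.
rewrite exchange_big.
under eq_bigr => j _.
  under eq_bigr do rewrite mul_posl_setpos_high //
                           (mul_posr_setpos_high _ _ _ (kB := Ordinal kB_lt)) //.
  rewrite -mulr_sumr B1 mulr1.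
  rewrite -(setpos_mul_posl_last _ _ (i k) (pA := Ordinal pA_lt)) //.
over.
exact: A1.
Qed.

Lemma line_stochastic_mul : line_stochastic (mxd_mul A B).
Proof.
move=> k i; case: (ltnP k (p - 1)); first exact: mxd_mul_line_low.
exact: mxd_mul_line_high.
Qed.

End LineStochasticMul.

Lemma Omega1_mul (R : numDomainType) (n p q : nat) (A : mxd R p n) (B : mxd R q n) :
  (0 < p)%N -> (0 < q)%N -> Omega1 A -> Omega1 B -> Omega1 (mxd_mul A B).
Proof.
move=> p_gt0 q_gt0 [A0 A1] [B0 B1]; split; last exact: line_stochastic_mul.
by move=> i; apply: sumr_ge0 => j _; apply: mulr_ge0.
Qed.

Theorem lemma3p4 (R : realFieldType) (p q n : nat)
  (hp : (2 <= p)%N) (hq : (2 <= q)%N) (hn : (1 <= n)%N)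
  (A : mxd R p n) (B : mxd R q n) :
  Omega1 A -> Omega1 B -> Omega1 (mxd_mul A B).
Proof. exact: Omega1_mul (ltnW hp) (ltnW hq). Qed.
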